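(* Suppose treatment assignment is ignorable given covariates $\mathbf{x}$ with aliasing by the function $\beta(\mathbf{x},\mathbf{w})$. Let $\mathbf{e}(\mathbf{x})=(\Pr(Z_1=1\mid\mathbf{x}),\ldots,\Pr(Z_G=1\mid\mathbf{x}))$ and let $\mathbf{f}(\cdot)$ be any (measurable) function. Then (a) $\mathbf{Z}$ is conditionally independent of $\{r_1-\beta(\mathbf{x},\mathbf{w}_1),\ldots,r_G-\beta(\mathbf{x},\mathbf{w}_G)\}$ given $\{\mathbf{e}(\mathbf{x}),\mathbf{f}(\mathbf{x})\}$; (b) $0<\Pr\{Z_g=1\mid \mathbf{e}(\mathbf{x}),\mathbf{f}(\mathbf{x})\}<1$ for $g=1,\ldots,G$; (c) if in addition the contrast $h_1,\ldots,h_G$ (constants with $\sum_g h_g=0$, not all zero) is not aliased with $\beta(\mathbf{x},\mathbf{w})$, then $$\mathrm{E}\Big\{\sum_{g=1}^G h_g r_g\,\Big|\,\mathbf{e}(\mathbf{x}),\mathbf{f}(\mathbf{x})\Big\}=\sum_{g=1}^G h_g\,\mathrm{E}\big\{R\,\big|\,Z_g=1,\mathbf{e}(\mathbf{x}),\mathbf{f}(\mathbf{x})\big\}.$$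
   Context: There are $G$ treatment groups. Each individual has a random vector $\mathbf{Z}=(Z_1,\ldots,Z_G)$ with $Z_g\in\{0,1\}$ and $\sum_{g=1}^G Z_g=1$. Each individual has observed covariates $\mathbf{x}$ and observed ''eligibility'' covariates $\mathbf{w}$; there are fixed distinct values $\mathbf{w}_1,\ldots,\mathbf{w}_G$ such that $Z_g=1$ if and only if $\mathbf{w}=\mathbf{w}_g$. Each individual has potential responses $r_1,\ldots,r_G$, and the observed response is $R=\sum_{g=1}^G Z_g r_g$. All expectations are assumed to exist. Definition (ignorable with aliasing): treatment assignment is ignorable given $\mathbf{x}$ with aliasing by a function $\beta(\mathbf{x},\mathbf{w})$ if (i) $\mathbf{Z}$ is conditionally independent of $\{r_1-\beta(\mathbf{x},\mathbf{w}_1),\ldots,r_G-\beta(\mathbf{x},\mathbf{w}_G)\}$ given $\mathbf{x}$, and (ii) $0<\Pr(Z_g=1\mid\mathbf{x})<1$ for $g=1,\ldots,G$. Definition (not aliased): a contrast $h_1,\ldots,h_G$ is not aliased with $\beta(\mathbf{x},\mathbf{w})$ if $\sum_{g=1}^G h_g\,\beta(\mathbf{x},\mathbf{w}_g)=0$ for all $\mathbf{x}$. *)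

From HB Require Import structures.
From mathcomp Require Import all_boot all_order all_algebra.
From mathcomp Require Import all_classical all_reals all_analysis.
Set Implicit Arguments. Unset Strict Implicit. Unset Printing Implicit Defensive.
Import Order.TTheory GRing.Theory Num.Theory.
Local Open Scope classical_set_scope.
Local Open Scope ring_scope.

Definition sigma_of {T : Type} {d} {U : measurableType d} (h : T -> U)
  : set (set T) := [set h @^-1` B | B in measurable].

Definition Gmeasurable {T : Type} {R : realType} (Gs : set (set T)) (Y : T -> R)
  : Prop := forall B : set R, measurable B -> Gs (Y @^-1` B).

Definition cond_exp_version {d} {T : measurableType d} {R : realType}
  (P : probability T R) (Gs : set (set T)) (X Y : T -> R) : Prop :=
  [/\ Gmeasurable Gs Y, P.-integrable setT (EFin \o Y) &
      forall A, Gs A ->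
        (\int[P]_(w in A) (Y w)%:E = \int[P]_(w in A) (X w)%:E)%E].

Definition cond_prob_version {d} {T : measurableType d} {R : realType}
  (P : probability T R) (Gs : set (set T)) (A : set T) (p : T -> R) : Prop :=
  cond_exp_version P Gs (\1_A) p.

Definition cond_exp_event_version {d} {T : measurableType d} {R : realType}
  (P : probability T R) (Gs : set (set T)) (A : set T) (X m : T -> R) : Prop :=
  [/\ Gmeasurable Gs m, P.-integrable A (EFin \o m) &
      forall B, Gs B ->
        (\int[P]_(w in B `&` A) (m w)%:E = \int[P]_(w in B `&` A) (X w)%:E)%E].

Definition cond_indep {d} {T : measurableType d} {R : realType}
  (P : probability T R) (F1 F2 Gs : set (set T)) : Prop :=
  forall A1 A2, F1 A1 -> F2 A2 ->
  forall p1 p2 : T -> R,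
    cond_prob_version P Gs A1 p1 -> cond_prob_version P Gs A2 p2 ->
    cond_prob_version P Gs (A1 `&` A2) (p1 \* p2).

(* sigma-algebra generated by the treatment indicator Z (coded as the index
   of the unique g with Z_g = 1; 'I_G carries the discrete sigma-algebra) *)
Definition sigma_Z {T : Type} {G : nat} (Z : T -> 'I_G) : set (set T) :=
  [set Z @^-1` S | S in [set: set 'I_G]].

Definition sigma_resid {T : Type} {R : realType} {G : nat} {dX}
  {X : measurableType dX} {W : Type}
  (x : T -> X) (r : 'I_G -> T -> R) (beta : X -> W -> R) (ws : 'I_G -> W)
  : set (set T) :=
  <<s [set A | exists g : 'I_G, exists B : set R, measurable B /\
          A = (fun t => r g t - beta (x t) (ws g)) @^-1` B] >>.

Definition sigma_ef {T : Type} {R : realType} {G : nat} {dX}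
  {X : measurableType dX} {dY} {Y : measurableType dY}
  (x : T -> X) (e : 'I_G -> X -> R) (f : X -> Y) : set (set T) :=
  <<s [set A | (exists g : 'I_G, exists B : set R, measurable B /\
                   A = (e g \o x) @^-1` B) \/
               (exists B : set Y, measurable B /\ A = (f \o x) @^-1` B)] >>.

Definition ignorable_aliasing {d} {T : measurableType d} {R : realType}
  (P : probability T R) {G : nat} {dX} {X : measurableType dX} {W : Type}
  (x : T -> X) (Z : T -> 'I_G) (r : 'I_G -> T -> R) (beta : X -> W -> R)
  (ws : 'I_G -> W) : Prop :=
  cond_indep P (sigma_Z Z) (sigma_resid x r beta ws) (sigma_of x) /\
  forall g : 'I_G, forall p : T -> R,
    cond_prob_version P (sigma_of x) [set t | Z t = g] p ->
    {ae P, forall t, 0 < p t < 1}.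

Definition not_aliased {R : realType} {G : nat} {dX} {X : measurableType dX}
  {W : Type} (h : 'I_G -> R) (beta : X -> W -> R) (ws : 'I_G -> W) : Prop :=
  forall a : X, \sum_(g < G) h g * beta a (ws g) = 0.

From HB Require Import structures.
From mathcomp Require Import all_boot all_order all_algebra.
From mathcomp Require Import all_classical all_reals all_analysis.
From mathcomp Require Import measurable_realfun.
Import Order.TTheory GRing.Theory Num.Theory.
Local Open Scope classical_set_scope.
Local Open Scope ring_scope.
Set Implicit Arguments. Unset Strict Implicit.

(* Write Sx for sigma(x) and Sef for sigma(e(x), f(x)), so that Sef is included
   in Sx.  The propensities e_g(x), versions of Pr(Z = g | Sx), are
   Sef-measurable, hence also versions of Pr(Z = g | Sef); this gives (b), and
   for A1 in sigma(Z) it makes Pr(A1 | Sef) a sum of propensities.  Pulling that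
   sum out of E[1_A2 | Sef] and using ignorability given x yields the product
   rule (a).  For (c), ignorability makes the measures 1_{Z = g} dP and
   e_g(x) dP agree on sigma(x, r_g - beta(x, w_g)), hence
   E[r_g 1_{Z = g} | Sef] = e_g(x) E[r_g | Sef]; as e_g(x) > 0 almost surely,
   E[R | Z = g, Sef] = E[r_g | Sef], and (c) follows by linearity.  Neither
   the conditions on the contrast h and non-aliasing, nor the description of Z
   through the eligibility covariates w, are needed. *)

Lemma funrpos_le_norm (T : Type) (R : realDomainType) (f : T -> R) x :
  `|f^\+ x| <= `|f x|.
Proof. by rewrite ger0_norm ?funrpos_ge0// ge_max ler_norm normr_ge0. Qed.

Lemma funrneg_le_norm (T : Type) (R : realDomainType) (f : T -> R) x :
  `|f^\- x| <= `|f x|.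
Proof. by have := funrpos_le_norm (\- f) x; rewrite funrposN normrN. Qed.

Lemma indic01 (T : Type) (R : realType) (A : set T) t : 0 <= (\1_A t : R) <= 1.
Proof. by rewrite indicE; case: (t \in A); rewrite ?lexx ?ler01. Qed.

Section fpushforward.
Context d d' (T : measurableType d) (U : measurableType d') (R : realType).
Variables (m : {finite_measure set T -> \bar R}) (f : T -> U).

(* The otherwise unused argument [mf] lets the measure instances below be
   found by unification. *)
Definition fpushforward (mf : measurable_fun setT f) : set U -> \bar R :=
  pushforward m f.

Variable mf : measurable_fun setT f.

Let pushforward_measure : {measure set U -> \bar R}.
Proof. by refine (pushforward m f); exact: mf. Defined.

HB.instance Definition _ := Measure.copy (fpushforward mf) pushforward_measure.

Let fpushforward_fin : fin_num_fun (fpushforward mf).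
Proof.
by move=> A mA; rewrite fin_num_measure// -[X in measurable X]setTI; exact: mf.
Qed.

HB.instance Definition _ :=
  Measure_isFinite.Build _ _ _ (fpushforward mf) fpushforward_fin.

End fpushforward.

Section density.
Context d (T : measurableType d) (R : realType) (mu : {finite_measure set T -> \bar R}).

Definition density (f : T -> R) (f0 : forall t, 0 <= f t)
    (intf : mu.-integrable setT (EFin \o f)) : set T -> \bar R :=
  fun A => (\int[mu]_(t in A) (f t)%:E)%E.

Variables (f : T -> R) (f0 : forall t, 0 <= f t)
  (intf : mu.-integrable setT (EFin \o f)).

Let mf : measurable_fun setT (EFin \o f). Proof. exact: measurable_int intf. Qed.

Let density0 : density f0 intf set0 = 0%E.
Proof. by rewrite /density integral_set0. Qed.

Let density_ge0 A : (0 <= density f0 intf A)%E.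
Proof. by apply: integral_ge0 => t _; rewrite lee_fin. Qed.

Let density_sigma_additive : semi_sigma_additive (density f0 intf).
Proof. by apply: semi_sigma_additive_nng_induced => // t; rewrite /= lee_fin. Qed.

HB.instance Definition _ := isMeasure.Build _ _ _ (density f0 intf)
  density0 density_ge0 density_sigma_additive.

Let density_fin : fin_num_fun (density f0 intf).
Proof. by move=> A mA; apply: integrable_fin_num => //; exact: integrableS intf. Qed.

HB.instance Definition _ := Measure_isFinite.Build _ _ _ (density f0 intf) density_fin.

Lemma density_dominates : density f0 intf `<< mu.
Proof.
move=> N mN A mA AN; rewrite /density null_set_integral//; last exact: mN.
exact: measurable_funS mf.
Qed.

(* The Radon-Nikodym derivative of [density f0 intf] is [f] almost everywhere. *)
Lemma ge0_integral_density (q : T -> \bar R) E : measurable E ->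
  measurable_fun setT q -> (forall t, (0 <= q t)%E) ->
  (\int[density f0 intf]_(t in E) q t = \int[mu]_(t in E) (q t * (f t)%:E))%E.
Proof.
move=> mE mq q0.
set phi := Radon_Nikodym_SigmaFinite.f (density f0 intf) mu.
have mphi : measurable_fun setT phi.
  exact: measurable_int (Radon_Nikodym_SigmaFinite.f_integrable density_dominates).
have ae_phi : ae_eq mu setT (EFin \o f) phi.
  apply: integral_ae_eq => // B _ mB.
  by rewrite -Radon_Nikodym_SigmaFinite.f_integral//; exact: density_dominates.
rewrite -(Radon_Nikodym_SigmaFinite.change_of_variables density_dominates) //;
  last exact: measurable_funTS.
apply: ae_eq_integral => //; try by apply: emeasurable_funM; exact: measurable_funTS.
by apply: ae_eqe_mul2l; apply: ae_eq_subset (ae_eq_sym ae_phi).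
Qed.

Lemma integral_density (q : T -> R) E : measurable E -> measurable_fun setT q ->
  mu.-integrable E (fun t => (q t * f t)%:E) ->
  (density f0 intf).-integrable E (EFin \o q) /\
  (\int[density f0 intf]_(t in E) (q t)%:E = \int[mu]_(t in E) (q t * f t)%:E)%E.
Proof.
move=> mE mq /integrableP[_ iqf].
have mEq : measurable_fun setT (EFin \o q) by exact/measurable_EFinP.
split.
  apply/integrableP; split; first exact: measurable_funTS.
  rewrite ge0_integral_density//; last exact: measurableT_comp.
  apply: le_lt_trans iqf; rewrite le_eqVlt; apply/orP; left; apply/eqP.
  by apply: eq_integral => t _; rewrite /= -EFinM normrM (ger0_norm (f0 t)).
rewrite integralE [RHS]integralE !ge0_integral_density//;
  [|exact: measurable_funeneg|exact: measurable_funepos].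
by congr (_ - _)%E; apply: eq_integral => t _;
  rewrite ?funeposE ?funenegE /= maxe_pMl ?lee_fin// mul0e -EFinM ?mulNr.
Qed.

End density.

Section measure_lemmas.
Context d (T : measurableType d) (R : realType) (mu : {measure set T -> \bar R}).

Lemma ae_notin (C : set T) : measurable C -> mu C = 0%E -> {ae mu, forall t, ~ C t}.
Proof. by move=> mC C0; exists C; split => // t /= /contrapT. Qed.

Lemma measure0_ae_notin (C : set T) : measurable C ->
  {ae mu, forall t, ~ C t} -> mu C = 0%E.
Proof.
move=> mC [N [mN N0 hN]]; apply: (subset_measure0 mC mN) => // t Ct.
by apply: hN => /=; apply.
Qed.

Lemma integral_ae_gt0_eq0 (D : set T) (u : T -> R) : measurable D ->
  measurable_fun D u -> {ae mu, forall t, D t -> 0 < u t} ->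
  (\int[mu]_(t in D) (u t)%:E = 0)%E -> mu D = 0%E.
Proof.
move=> mD mu0 u_gt0 u0; apply: measure0_ae_notin => //.
have mEu : measurable_fun D (EFin \o u) by exact/measurable_EFinP.
have : (\int[mu]_(t in D) `|(EFin \o u) t| = 0)%E.
  rewrite -u0; apply: ae_eq_integral => //; first exact: measurableT_comp.
  by apply: filterS u_gt0 => t h Dt; apply: gee0_abs; rewrite lee_fin ltW// h.
move/(ae_eq_integral_abs mu mD mEu).1; apply: filterS2 u_gt0 => t ut_gt0 ut0 Dt.
by have := ut_gt0 Dt; rewrite (EFin_inj (ut0 Dt)) ltxx.
Qed.

Lemma integrable_ae_eq (u v : T -> R) : {ae mu, forall t, u t = v t} ->
  measurable_fun setT u -> mu.-integrable setT (EFin \o v) ->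
  mu.-integrable setT (EFin \o u).
Proof.
move=> uv mu0 /integrableP[mv iv]; apply/integrableP; split.
  exact/measurable_EFinP.
rewrite (ae_eq_integral (fun t => `|(EFin \o v) t|)%E) //.
- by apply: measurableT_comp => //; exact/measurable_EFinP.
- exact: measurableT_comp.
- by apply: filterS uv => t /= ->.
Qed.

Lemma integral_setI (A B : set T) (u : T -> R) :
  (\int[mu]_(t in A `&` B) (u t)%:E = \int[mu]_(t in A) (u t * \1_B t)%:E)%E.
Proof.
by rewrite integral_mkcondr; apply: eq_integral => t _; rewrite epatch_indic EFinM.
Qed.

Lemma integrable_mul01 (u v : T -> R) C : measurable C -> measurable_fun setT u ->
  (forall t, 0 <= u t <= 1) -> mu.-integrable setT (EFin \o v) ->
  mu.-integrable C (fun t => (v t * u t)%:E).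
Proof.
move=> mC mu0 u01 iv.
apply: le_integrable (integrableS measurableT mC (subsetT C) iv) => //.
  apply/measurable_EFinP; apply: measurable_funM; apply: measurable_funTS => //.
  exact/measurable_EFinP/(measurable_int _ iv).
move=> t _; rewrite !abse_EFin lee_fin normrM.
by case/andP: (u01 t) => u0 u1; rewrite [`|u t|]ger0_norm// ler_piMr.
Qed.

End measure_lemmas.

Section integral_generated.
Context d (T : measurableType d) (R : realType).

(* Dynkin's pi-lambda theorem, transported to integrals. *)
Lemma integral_eq_generated (G : set (set T))
    (m1 m2 : {finite_measure set T -> \bar R}) (f : T -> R) C :
  G `<=` measurable -> setI_closed G -> G setT ->
  (forall A, G A -> m1 A = m2 A) ->
  measurable_fun setT (f : g_sigma_algebraType G -> R) -> <<s G >> C ->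
  m1.-integrable C (EFin \o f) -> m2.-integrable C (EFin \o f) ->
  (\int[m1]_(t in C) (f t)%:E = \int[m2]_(t in C) (f t)%:E)%E.
Proof.
move=> Gm GI GT m12 mf GC i1 i2.
have sGm : <<s G >> `<=` measurable.
  by apply: smallest_sub => //; exact: sigma_algebra_measurable.
have m12s : forall A, <<s G >> A -> m1 A = m2 A.
  apply: (g_sigma_algebra_measure_unique G Gm (fun _ => setT)) => //.
  - by apply/seteqP; split => // t _; exists 0%N.
  - by move=> _; rewrite -ge0_fin_numE ?measure_ge0// fin_num_measure.
have mid : measurable_fun setT (id : T -> g_sigma_algebraType G).
  by move=> _ B mB; rewrite setTI; exact: sGm.
have mEf : measurable_fun setT (EFin \o (f : g_sigma_algebraType G -> R)).
  exact/measurable_EFinP.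
transitivity (\int[fpushforward m1 mid]_(t in C) (f t)%:E)%E.
  by symmetry; apply: integral_pushforward.
rewrite (eq_measure_integral (fpushforward m2 mid)); last first.
  by move=> A mA _; exact: m12s.
by apply: integral_pushforward.
Qed.

End integral_generated.

Section sigma_of.
Context (T : Type) dU (U : measurableType dU).

Lemma sigma_algebra_sigma_of (h : T -> U) : sigma_algebra setT (sigma_of h).
Proof.
have -> : sigma_of h = preimage_set_system setT h measurable.
  by apply/seteqP; split => A [B mB <-]; exists B => //; rewrite setTI.
exact/sigma_algebra_preimage/sigma_algebra_measurable.
Qed.

End sigma_of.

Lemma sigma_of_measurable d (T : measurableType d) dU (U : measurableType dU)
  (h : T -> U) : measurable_fun setT h -> sigma_of h `<=` measurable.
Proof. by move=> mh A [B mB <-]; rewrite -(setTI (h @^-1` B)); exact: mh. Qed.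

Lemma Gmeasurable_mono (T : Type) (R : realType) (S1 S2 : set (set T))
  (Y : T -> R) : S1 `<=` S2 -> Gmeasurable S1 Y -> Gmeasurable S2 Y.
Proof. by move=> S12 Y1 B mB; exact/S12/Y1. Qed.

Lemma cond_exp_version_sub d (T : measurableType d) (R : realType)
  (P : probability T R) (S1 S2 : set (set T)) (X Y : T -> R) :
  S1 `<=` S2 -> Gmeasurable S1 Y -> cond_exp_version P S2 X Y ->
  cond_exp_version P S1 X Y.
Proof. by move=> S12 Y1 [_ iY XY]; split => // A /S12; exact: XY. Qed.

Section sub_sigma_algebra.
Context d (T : measurableType d) (R : realType) (P : probability T R).
Variables (S : set (set T)) (hS : sigma_algebra setT S)
  (hsub : S `<=` measurable).
Local Notation T' := (g_sigma_algebraType S).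

Let measurableT'E : (measurable : set (set T')) = S.
Proof. exact: measurable_g_measurableTypeE. Qed.

Lemma GmeasurableP (Y : T -> R) :
  Gmeasurable S Y <-> measurable_fun setT (Y : T' -> R).
Proof.
split=> [SY _ B mB|mY B mB]; first by rewrite setTI measurableT'E; exact: SY.
by have := mY measurableT B mB; rewrite setTI measurableT'E.
Qed.

Lemma Gmeasurable_measurable (Y : T -> R) :
  Gmeasurable S Y -> measurable_fun setT Y.
Proof. by move=> SY _ B mB; rewrite setTI; exact/hsub/SY. Qed.

Lemma Gmeasurable_measurableE (Y : T -> R) D :
  Gmeasurable S Y -> measurable_fun D (EFin \o Y).
Proof.
by move/Gmeasurable_measurable => mY; exact/measurable_EFinP/measurable_funTS.
Qed.

Let measurable_sub dU (U : measurableType dU) (Y : T' -> U) :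
  measurable_fun setT Y -> measurable_fun setT (Y : T -> U).
Proof.
move=> mY _ B mB; have := mY measurableT B mB.
by rewrite !setTI measurableT'E => /hsub.
Qed.

Let measurable_idS : measurable_fun setT (id : T -> T').
Proof. by move=> _ B; rewrite measurableT'E setTI => /hsub. Qed.

Let PS := fpushforward P measurable_idS.

Let integral_PS (Y : T' -> \bar R) C : S C -> measurable_fun setT Y ->
  (forall t, 0 <= Y t)%E -> (\int[PS]_(t in C) Y t = \int[P]_(t in C) Y t)%E.
Proof.
move=> SC mY Y0; rewrite /PS /fpushforward ge0_integral_pushforward//.
- by rewrite measurableT'E.
- exact: measurable_funTS.
Qed.

Let density_PS_dominates (X : T -> R) (X0 : forall t, 0 <= X t)
    (iX : P.-integrable setT (EFin \o X)) :
  fpushforward (density X0 iX) measurable_idS `<< PS.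
Proof.
move=> N PSN A mA AN; apply: null_set_integral.
- by apply: hsub; rewrite -measurableT'E.
- by apply: measurable_funTS; exact: measurable_int iX.
- exact: PSN.
Qed.

(* [Y] is the Radon-Nikodym derivative, with respect to [P] restricted to [S],
   of the measure [A |-> \int_A X dP] restricted to [S]. *)
Lemma exists_cond_exp_ge0 (X : T -> R) : (forall t, 0 <= X t) ->
    P.-integrable setT (EFin \o X) ->
  exists Y : T -> R, [/\ cond_exp_version P S X Y, (forall t, 0 <= Y t) &
    forall q : T -> R, Gmeasurable S q -> (forall t, 0 <= q t) ->
    forall C, S C ->
      (\int[P]_(t in C) (q t * Y t)%:E = \int[P]_(t in C) (q t * X t)%:E)%E].
Proof.
move=> X0 iX.
pose nu := fpushforward (density X0 iX) measurable_idS.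
have nu_PS : nu `<< PS := density_PS_dominates X0 iX.
pose phi := Radon_Nikodym_SigmaFinite.f nu PS.
have phi0 := Radon_Nikodym_SigmaFinite.f_ge0 nu_PS.
have phifin := Radon_Nikodym_SigmaFinite.f_fin_num nu_PS.
have phiint := Radon_Nikodym_SigmaFinite.f_integrable nu_PS.
have mphi : measurable_fun setT phi := measurable_int _ phiint.
have phiE : EFin \o (fine \o phi) = phi.
  by apply/funext => t /=; rewrite fineK// phifin.
exists (fine \o phi); split.
- split.
  + by apply/GmeasurableP; apply: measurableT_comp => //; exact: fine_measurable.
  + rewrite phiE; apply/integrableP; split; first exact: measurable_sub.
    rewrite -integral_PS//; first by case/integrableP: phiint.
    * by rewrite -measurableT'E.
    * exact: measurableT_comp.
  + move=> C SC; rewrite (_ : (fun w => ((fine \o phi) w)%:E) = phi)//.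
    rewrite -integral_PS// -Radon_Nikodym_SigmaFinite.f_integral//.
    by rewrite measurableT'E.
- by move=> t /=; apply: fine_ge0; exact: phi0.
- move=> q Sq q0 C SC.
  have mq : measurable_fun setT (EFin \o (q : T' -> R)).
    by apply/measurable_EFinP; exact/GmeasurableP.
  transitivity (\int[P]_(t in C) ((q t)%:E * phi t))%E.
    by apply: eq_integral => t _; rewrite /= EFinM fineK// phifin.
  rewrite -integral_PS//; last 2 first.
    + exact: emeasurable_funM.
    + by move=> t; rewrite mule_ge0// lee_fin.
  have mC : measurable (C : set T') by rewrite measurableT'E.
  rewrite (Radon_Nikodym_SigmaFinite.change_of_variables nu_PS)//;
    try (by move=> t; rewrite lee_fin); try (exact: measurable_funTS).
  rewrite /nu /fpushforward ge0_integral_pushforward//;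
    try (by move=> t; rewrite lee_fin); try (exact: measurable_funTS).
  rewrite ge0_integral_density//; [exact: hsub|exact: measurable_sub mq].
Qed.

Lemma Gmeasurable_lt (m1 m2 : T -> R) : Gmeasurable S m1 -> Gmeasurable S m2 ->
  S [set t | m2 t < m1 t].
Proof.
move=> /GmeasurableP m1S /GmeasurableP m2S.
have /GmeasurableP : measurable_fun setT (fun t : g_sigma_algebraType S => m1 t - m2 t).
  exact: measurable_funB.
move=> /(_ `]0, +oo[%classic (measurable_itv _)).
rewrite (_ : _ @^-1` _ = [set t | m2 t < m1 t]) //.
by apply/seteqP; split => t /=; rewrite in_itv /= andbT subr_gt0.
Qed.

Let measure_lt_eq0 (A : set T) (m1 m2 : T -> R) : measurable A ->
  (forall C, S C -> P (C `&` A) = 0%E -> P C = 0%E) ->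
  Gmeasurable S m1 -> Gmeasurable S m2 ->
  P.-integrable A (EFin \o m1) -> P.-integrable A (EFin \o m2) ->
  (forall B, S B -> (\int[P]_(t in B `&` A) (m1 t)%:E =
                     \int[P]_(t in B `&` A) (m2 t)%:E)%E) ->
  P [set t | m2 t < m1 t] = 0%E.
Proof.
move=> mA A_charges m1S m2S i1 i2 m12.
apply: A_charges; first exact: Gmeasurable_lt.
have mltA : measurable ([set t | m2 t < m1 t] `&` A).
  by apply: measurableI => //; exact/hsub/Gmeasurable_lt.
apply: (integral_ae_gt0_eq0 (u := fun t => m1 t - m2 t) mltA).
- by apply: measurable_funB; apply: measurable_funTS;
    exact: Gmeasurable_measurable.
- by apply: aeW => t [/= lt _]; rewrite subr_gt0.
- have iS (m : T -> R) : P.-integrable A (EFin \o m) ->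
      P.-integrable ([set t | m2 t < m1 t] `&` A) (EFin \o m).
    by apply: integrableS => //; exact: subIsetr.
  rewrite (_ : (fun t => (m1 t - m2 t)%:E) = ((EFin \o m1) \- (EFin \o m2))%E) //.
  rewrite integralB ?iS// m12 ?subee// ?integrable_fin_num ?iS//.
  exact: Gmeasurable_lt.
Qed.

Lemma cond_exp_event_ae_eq (A : set T) (m1 m2 : T -> R) : measurable A ->
  (forall C, S C -> P (C `&` A) = 0%E -> P C = 0%E) ->
  Gmeasurable S m1 -> Gmeasurable S m2 ->
  P.-integrable A (EFin \o m1) -> P.-integrable A (EFin \o m2) ->
  (forall B, S B -> (\int[P]_(t in B `&` A) (m1 t)%:E =
                     \int[P]_(t in B `&` A) (m2 t)%:E)%E) ->
  {ae P, forall t, m1 t = m2 t}.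
Proof.
move=> mA A_charges m1S m2S i1 i2 m12.
have n1 := measure_lt_eq0 mA A_charges m1S m2S i1 i2 m12.
have n2 := measure_lt_eq0 mA A_charges m2S m1S i2 i1 (fun B SB => esym (m12 B SB)).
have := ae_notin (hsub (Gmeasurable_lt m1S m2S)) n1.
have := ae_notin (hsub (Gmeasurable_lt m2S m1S)) n2.
apply: filterS2 => t /negP; rewrite -leNgt => ? /negP; rewrite -leNgt => ?.
by apply/eqP; rewrite eq_le; apply/andP.
Qed.

Lemma cond_exp_version_ae_eq (X Y1 Y2 : T -> R) : cond_exp_version P S X Y1 ->
  cond_exp_version P S X Y2 -> {ae P, forall t, Y1 t = Y2 t}.
Proof.
case=> Y1S i1 XY1 [Y2S i2 XY2]; apply: (cond_exp_event_ae_eq measurableT) => //.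
- by move=> C _; rewrite setIT.
- by move=> B SB; rewrite setIT XY1 // XY2.
Qed.

Lemma GmeasurableM (u v : T -> R) :
  Gmeasurable S u -> Gmeasurable S v -> Gmeasurable S (u \* v).
Proof.
by move=> /GmeasurableP uS /GmeasurableP vS; apply/GmeasurableP; exact: measurable_funM.
Qed.

Lemma Gmeasurable_funrpos (u : T -> R) : Gmeasurable S u -> Gmeasurable S u^\+.
Proof. by move/GmeasurableP => uS; apply/GmeasurableP; exact: measurable_funrpos. Qed.

Lemma Gmeasurable_funrneg (u : T -> R) : Gmeasurable S u -> Gmeasurable S u^\-.
Proof. by move/GmeasurableP => uS; apply/GmeasurableP; exact: measurable_funrneg. Qed.

Lemma cond_exp_ge0 (X Y : T -> R) : (forall t, 0 <= X t) ->
  P.-integrable setT (EFin \o X) -> cond_exp_version P S X Y ->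
  {ae P, forall t, 0 <= Y t}.
Proof.
move=> X0 iX XY; have [Y' [XY' Y'0 _]] := exists_cond_exp_ge0 X0 iX.
by apply: filterS (cond_exp_version_ae_eq XY XY') => t ->.
Qed.

Lemma ge0_cond_exp_pull_out (X Y q : T -> R) C : (forall t, 0 <= X t) ->
  P.-integrable setT (EFin \o X) -> cond_exp_version P S X Y ->
  Gmeasurable S q -> (forall t, 0 <= q t) -> S C ->
  (\int[P]_(t in C) (q t * Y t)%:E = \int[P]_(t in C) (q t * X t)%:E)%E.
Proof.
move=> X0 iX XY qS q0 SC.
have [Y' [XY' _ pull_out]] := exists_cond_exp_ge0 X0 iX.
have [YS _ _] := XY; have [Y'S _ _] := XY'.
rewrite -(pull_out q qS q0 C SC); apply: ae_eq_integral.
- exact: hsub.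
- exact: Gmeasurable_measurableE (GmeasurableM qS YS).
- exact: Gmeasurable_measurableE (GmeasurableM qS Y'S).
- by apply: filterS (cond_exp_version_ae_eq XY XY') => t /= -> _.
Qed.

Let integrable_mul_le (u v w : T -> R) C : measurable C ->
  measurable_fun C u -> measurable_fun C w ->
  (forall t, `|u t| <= `|v t|) -> P.-integrable C (fun t => (v t * w t)%:E) ->
  P.-integrable C (fun t => (u t * w t)%:E).
Proof.
move=> mC mu mw uv ivw; apply: le_integrable ivw => //.
  by apply/measurable_EFinP; exact: measurable_funM.
by move=> t _; rewrite !abse_EFin lee_fin !normrM ler_wpM2r.
Qed.

Lemma ge0_cond_exp_pull_out_integrable (X Y q : T -> R) C : (forall t, 0 <= X t) ->
  P.-integrable setT (EFin \o X) -> cond_exp_version P S X Y ->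
  Gmeasurable S q -> S C -> P.-integrable C (fun t => (q t * X t)%:E) ->
  P.-integrable C (fun t => (q t * Y t)%:E) /\
  (\int[P]_(t in C) (q t * Y t)%:E = \int[P]_(t in C) (q t * X t)%:E)%E.
Proof.
move=> X0 iX XY qS SC iqX; have mC := hsub SC; have [YS _ _] := XY.
have mX : measurable_fun setT X by exact/measurable_EFinP/(measurable_int _ iX).
have Y0 := cond_exp_ge0 X0 iX XY.
have part (u : T -> R) : Gmeasurable S u -> (forall t, 0 <= u t) ->
    (forall t, `|u t| <= `|q t|) ->
    [/\ P.-integrable C (fun t => (u t * X t)%:E),
        P.-integrable C (fun t => (u t * Y t)%:E) &
        (\int[P]_(t in C) (u t * Y t)%:E = \int[P]_(t in C) (u t * X t)%:E)%E].
  move=> uS u0 uq; have uXY := ge0_cond_exp_pull_out X0 iX XY uS u0 SC.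
  have mu := Gmeasurable_measurable uS.
  have iuX : P.-integrable C (fun t => (u t * X t)%:E).
    by apply: integrable_mul_le iqX => //; exact: measurable_funTS.
  split=> //; apply/integrableP; split.
    exact: Gmeasurable_measurableE (GmeasurableM uS YS).
  rewrite (ae_eq_integral (fun t => (u t * Y t)%:E)) //.
  - rewrite uXY; case/integrableP: iuX => _; apply: le_lt_trans.
    by rewrite le_eqVlt; apply/orP; left; apply/eqP; apply: eq_integral => t _;
      rewrite gee0_abs// lee_fin mulr_ge0.
  - by apply: measurableT_comp => //; exact: Gmeasurable_measurableE (GmeasurableM uS YS).
  - exact: Gmeasurable_measurableE (GmeasurableM uS YS).
  - by apply: filterS Y0 => t Yt0 _; rewrite gee0_abs// lee_fin mulr_ge0.
have [iqpX iqpY qpYX] :=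
  part _ (Gmeasurable_funrpos qS) (funrpos_ge0 q) (funrpos_le_norm q).
have [iqnX iqnY qnYX] :=
  part _ (Gmeasurable_funrneg qS) (funrneg_ge0 q) (funrneg_le_norm q).
have qE (V : T -> R) : (fun t => (q t * V t)%:E) =
    ((fun t => (q^\+ t * V t)%:E) \- (fun t => (q^\- t * V t)%:E))%E.
  by apply/funext => t; rewrite /= -EFinB -mulrBl -[in LHS](funrposBneg q).
split; first by rewrite qE; exact: integrableB.
by rewrite qE integralB// qpYX qnYX -integralB// -qE.
Qed.

Lemma cond_exp_versionB (X1 X2 Y1 Y2 : T -> R) :
  P.-integrable setT (EFin \o X1) -> P.-integrable setT (EFin \o X2) ->
  cond_exp_version P S X1 Y1 -> cond_exp_version P S X2 Y2 ->
  cond_exp_version P S (fun t => X1 t - X2 t) (fun t => Y1 t - Y2 t).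
Proof.
move=> iX1 iX2 [Y1S iY1 XY1] [Y2S iY2 XY2]; split.
- by apply/GmeasurableP; apply: measurable_funB; exact/GmeasurableP.
- by rewrite (_ : EFin \o _ = (EFin \o Y1) \- (EFin \o Y2))%E//; exact: integrableB.
- move=> C SC; have mC := hsub SC; have iS := integrableS measurableT mC (subsetT C).
  under eq_integral do rewrite EFinB; under [RHS]eq_integral do rewrite EFinB.
  by rewrite !integralB_EFin ?iS// XY1// XY2.
Qed.

Lemma cond_exp_version_funrposneg (X Yp Yn : T -> R) :
  P.-integrable setT (EFin \o X) ->
  cond_exp_version P S X^\+ Yp -> cond_exp_version P S X^\- Yn ->
  cond_exp_version P S X (fun t => Yp t - Yn t).
Proof.
move=> iX XYp XYn; have := cond_exp_versionB (integrable_funrpos measurableT iX)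
  (integrable_funrneg measurableT iX) XYp XYn.
by rewrite (funext (fun t => congr1 (@^~ t) (funrposBneg X))).
Qed.

Lemma exists_cond_exp (X : T -> R) : P.-integrable setT (EFin \o X) ->
  exists Y, cond_exp_version P S X Y.
Proof.
move=> iX; have iXp := integrable_funrpos measurableT iX.
have [Yp [XYp _ _]] := exists_cond_exp_ge0 (funrpos_ge0 X) iXp.
have iXn := integrable_funrneg measurableT iX.
have [Yn [XYn _ _]] := exists_cond_exp_ge0 (funrneg_ge0 X) iXn.
by exists (fun t => Yp t - Yn t); exact: cond_exp_version_funrposneg.
Qed.

Lemma cond_exp_pull_out (X Y q : T -> R) C : P.-integrable setT (EFin \o X) ->
  cond_exp_version P S X Y -> Gmeasurable S q -> S C ->
  P.-integrable C (fun t => (q t * X t)%:E) ->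
  (\int[P]_(t in C) (q t * Y t)%:E = \int[P]_(t in C) (q t * X t)%:E)%E.
Proof.
move=> iX XY qS SC iqX; have mC := hsub SC; have [YS _ _] := XY.
have mq := measurable_funTS (D := C) (Gmeasurable_measurable qS).
have mX : measurable_fun setT X by exact/measurable_EFinP/(measurable_int _ iX).
have iXp := integrable_funrpos measurableT iX.
have iXn := integrable_funrneg measurableT iX.
have [Yp [XYp _ _]] := exists_cond_exp_ge0 (funrpos_ge0 X) iXp.
have [Yn [XYn _ _]] := exists_cond_exp_ge0 (funrneg_ge0 X) iXn.
have iqX' (V : T -> R) : measurable_fun setT V -> (forall t, `|V t| <= `|X t|) ->
    P.-integrable C (fun t => (q t * V t)%:E).
  move=> mV VX; apply: le_integrable iqX => //.
    by apply/measurable_EFinP; apply: measurable_funM => //; exact: measurable_funTS.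
  by move=> t _; rewrite !abse_EFin lee_fin !normrM ler_wpM2l.
have iqXp := iqX' _ (measurable_funrpos mX) (funrpos_le_norm X).
have iqXn := iqX' _ (measurable_funrneg mX) (funrneg_le_norm X).
have [iqYp qYXp] := ge0_cond_exp_pull_out_integrable (funrpos_ge0 X) iXp XYp qS SC iqXp.
have [iqYn qYXn] := ge0_cond_exp_pull_out_integrable (funrneg_ge0 X) iXn XYn qS SC iqXn.
have XY' := cond_exp_version_funrposneg iX XYp XYn.
transitivity (\int[P]_(t in C) ((q t * Yp t)%:E - (q t * Yn t)%:E))%E.
  apply: ae_eq_integral => //.
  - exact: Gmeasurable_measurableE (GmeasurableM qS YS).
  - by apply/measurable_EFinP; apply: measurable_funB;
      apply: measurable_funM => //; apply: measurable_funTS;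
      apply: Gmeasurable_measurable; [case: XYp|case: XYn].
  - by apply: filterS (cond_exp_version_ae_eq XY XY') => t /= -> _;
      rewrite mulrBr EFinB.
rewrite integralB_EFin// qYXp qYXn -integralB_EFin//.
apply: eq_integral => t _; rewrite -EFinB -mulrBr.
by rewrite -[in RHS](funrposBneg X).
Qed.

Lemma cond_exp_version_sum n (c : 'I_n -> R) (X Y : 'I_n -> T -> R) :
  (forall i, P.-integrable setT (EFin \o X i)) ->
  (forall i, cond_exp_version P S (X i) (Y i)) ->
  cond_exp_version P S (fun t => \sum_(i < n) c i * X i t)
                       (fun t => \sum_(i < n) c i * Y i t).
Proof.
move=> iX XY; have iY i : P.-integrable setT (EFin \o Y i) by case: (XY i).
have integral_sum (V : 'I_n -> T -> R) C : measurable C ->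
    (forall i, P.-integrable setT (EFin \o V i)) ->
    (\int[P]_(t in C) (\sum_(i < n) c i * V i t)%:E =
     \sum_(i < n) (c i)%:E * \int[P]_(t in C) (V i t)%:E)%E.
  move=> mC iV.
  transitivity (\int[P]_(t in C) (\sum_(i < n) ((c i)%:E * (EFin \o V i) t)))%E.
    by apply: eq_integral => t _; rewrite -sumEFin.
  rewrite integral_sum//; last first.
    by move=> i; apply: integrableZl => //; exact: integrableS (iV i).
  by apply: eq_bigr => i _; rewrite -integralZl//; exact: integrableS (iV i).
split.
- apply/GmeasurableP; apply: measurable_sum => i; apply: measurable_funM => //.
  by case: (XY i) => /GmeasurableP.
- rewrite (_ : EFin \o _ = fun t => \sum_(i < n) ((c i)%:E * (EFin \o Y i) t))%E;
    last by apply/funext => t; rewrite /= -sumEFin.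
  by apply: integrable_sum => // i _; apply: integrableZl.
- move=> C SC; have mC := hsub SC.
  by rewrite !integral_sum//; apply: eq_bigr => i _; case: (XY i) => _ _ ->.
Qed.

End sub_sigma_algebra.

Section proposition3.
Context (d : measure_display) (T : measurableType d) (R : realType)
  (P : probability T R) (G : nat)
  (dX : measure_display) (X : measurableType dX)
  (dY : measure_display) (Y : measurableType dY) (W : Type)
  (x : T -> X) (ws : 'I_G -> W) (Z : T -> 'I_G)
  (r : 'I_G -> T -> R) (beta : X -> W -> R)
  (e : 'I_G -> X -> R) (f : X -> Y).
Hypotheses (mx : measurable_fun setT x) (mf : measurable_fun setT f)
  (me : forall g, measurable_fun setT (e g))
  (mbeta : forall g, measurable_fun setT (fun a => beta a (ws g)))
  (mZ : forall g, measurable [set t | Z t = g])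
  (ir : forall g, P.-integrable setT (EFin \o r g))
  (Hign : ignorable_aliasing P x Z r beta ws)
  (He : forall g, cond_prob_version P (sigma_of x) [set t | Z t = g] (e g \o x)).

Local Notation Sx := (sigma_of x).
Local Notation Sef := (sigma_ef x e f).

Let Sx_sigma : sigma_algebra setT Sx := sigma_algebra_sigma_of x.
Let Sx_sub : Sx `<=` measurable := sigma_of_measurable mx.
Let Sef_sigma : sigma_algebra setT Sef := smallest_sigma_algebra _ _.

Lemma sigma_ef_sub : Sef `<=` Sx.
Proof.
apply: smallest_sub => // A [[g [B [mB ->]]]|[B [mB ->]]].
- exists (e g @^-1` B) => //.
  by rewrite -(setTI (e g @^-1` B)); exact: (me g measurableT mB).
- exists (f @^-1` B) => //.
  by rewrite -(setTI (f @^-1` B)); exact: (mf measurableT mB).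
Qed.

Let Sef_sub : Sef `<=` measurable.
Proof. by move=> A /sigma_ef_sub /Sx_sub. Qed.

Lemma Gmeasurable_e g : Gmeasurable Sef (e g \o x).
Proof. by move=> B mB; apply: sub_sigma_algebra; left; exists g; exists B. Qed.

Lemma measurable_r g : measurable_fun setT (r g).
Proof. by apply/measurable_EFinP; exact: measurable_int (ir g). Qed.

Lemma measurable_resid g : measurable_fun setT (fun t => r g t - beta (x t) (ws g)).
Proof. exact: measurable_funB (measurable_r g) (measurableT_comp (mbeta g) mx). Qed.

Lemma sigma_resid_measurable : sigma_resid x r beta ws `<=` measurable.
Proof.
apply: smallest_sub; first exact: sigma_algebra_measurable.
move=> A [g [B [mB ->]]]; rewrite -(setTI (_ @^-1` B)).
exact: (measurable_resid g measurableT mB).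
Qed.

Lemma sigma_Z_measurable : sigma_Z Z `<=` measurable.
Proof.
move=> _ [S1 _ <-].
have -> : Z @^-1` S1 = \bigcup_(g in S1) [set t | Z t = g].
  apply/seteqP; split => [t S1Zt|t [g S1g /= Ztg]]; first by exists (Z t).
  by rewrite /preimage /= Ztg.
by apply: fin_bigcup_measurable => //; exact: finite_finset.
Qed.

(* A version of the propensity bounded everywhere: [e g (x t)] itself is only
   known to lie in (0, 1) almost surely. *)
Definition ec g t := Num.min (Num.max (e g (x t)) 0) 1.

Lemma ec01 g t : 0 <= ec g t <= 1.
Proof. by rewrite le_min le_max ge_min !lexx ler01 !orbT. Qed.

Lemma e01_ae g : {ae P, forall t, 0 < e g (x t) < 1}.
Proof. exact: (Hign.2 g (e g \o x) (He g)). Qed.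

Lemma ec_ae g : {ae P, forall t, ec g t = e g (x t)}.
Proof.
apply: filterS (e01_ae g) => t /andP[e0 e1].
by rewrite /ec max_l ?ltW// min_l ?ltW.
Qed.

Lemma ec_gt0_ae g : {ae P, forall t, 0 < ec g t}.
Proof. by apply: filterS2 (e01_ae g) (ec_ae g) => t /andP[+ _] ->. Qed.

Lemma Gmeasurable_ec g : Gmeasurable Sef (ec g).
Proof.
apply/(GmeasurableP Sef_sigma); apply: measurable_minr => //.
apply: measurable_maxr => //; apply/(GmeasurableP Sef_sigma).
exact: Gmeasurable_e.
Qed.

Lemma measurable_ec g : measurable_fun setT (ec g).
Proof. by apply: (Gmeasurable_measurable Sef_sub); exact: Gmeasurable_ec. Qed.

Lemma integrable_ec g : P.-integrable setT (EFin \o ec g).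
Proof.
rewrite (_ : EFin \o _ = fun t => (cst 1 t * ec g t)%:E); last first.
  by apply/funext => t; rewrite /= mul1r.
apply: integrable_mul01 (measurable_ec g) (ec01 g) _ => //.
exact: finite_measure_integrable_cst.
Qed.

Lemma ec_cond_prob_x g : cond_prob_version P Sx [set t | Z t = g] (ec g).
Proof.
split.
- exact: Gmeasurable_mono sigma_ef_sub (Gmeasurable_ec g).
- exact: integrable_ec.
- move=> C SC; case: (He g) => _ _ <- //; apply: ae_eq_integral.
  + exact: Sx_sub.
  + exact/measurable_EFinP/measurable_funTS/measurable_ec.
  + exact/measurable_EFinP/measurable_funTS/measurableT_comp.
  + by apply: filterS (ec_ae g) => t -> _.
Qed.

Lemma ec_cond_prob_ef g : cond_prob_version P Sef [set t | Z t = g] (ec g).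
Proof.
exact: cond_exp_version_sub sigma_ef_sub (Gmeasurable_ec g) (ec_cond_prob_x g).
Qed.

Lemma cond_indep_integral (q : T -> R) (A1 A2 C : set T) :
  sigma_Z Z A1 -> sigma_resid x r beta ws A2 -> (forall t, 0 <= q t) ->
  cond_prob_version P Sx A1 q -> Sx C ->
  P (C `&` (A1 `&` A2)) = (\int[P]_(t in C) (q t * \1_A2 t)%:E)%E.
Proof.
move=> hA1 hA2 q0 A1q SC; have mA2 := sigma_resid_measurable hA2.
have iA2 : P.-integrable setT (EFin \o (\1_A2 : T -> R)) by exact: integrable_indic.
have [s A2s] := exists_cond_exp Sx_sigma Sx_sub iA2.
have [_ _ A12qs] := Hign.1 A1 A2 hA1 hA2 q s A1q A2s.
rewrite -(ge0_cond_exp_pull_out Sx_sigma Sx_sub _ iA2 A2s) //; last by case: A1q.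
move: (A12qs C SC) => /= ->; rewrite integral_indic; first by rewrite setIC.
- exact: Sx_sub.
- by apply: measurableI => //; exact: sigma_Z_measurable.
Qed.

Definition ec_set (S1 : set 'I_G) t := \sum_(g < G) \1_S1 g * ec g t.

Lemma ec_set_ge0 S1 t : 0 <= ec_set S1 t.
Proof.
apply: sumr_ge0 => g _; apply: mulr_ge0.
- by case/andP: (indic01 R S1 g).
- by case/andP: (ec01 g t).
Qed.

Lemma ec_set_cond_prob (S : set (set T)) S1 : sigma_algebra setT S -> S `<=` measurable ->
  (forall g, cond_prob_version P S [set t | Z t = g] (ec g)) ->
  cond_prob_version P S (Z @^-1` S1) (ec_set S1).
Proof.
move=> hS hsub Zec.
have := cond_exp_version_sum hS hsub (fun g => \1_S1 g)
  (fun g => integrable_indic _ (mZ g)) Zec.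
congr cond_exp_version; apply/funext => t.
rewrite (bigD1 (Z t)) //= big1 ?addr0.
  by rewrite [\1_[set _ | _] _]indicE mem_set// mulr1 !indicE.
move=> g gZ; rewrite [\1_[set _ | _] _]indicE memNset ?mulr0//= => Ztg.
by move: gZ; rewrite Ztg eqxx.
Qed.

Lemma cond_indep_ef : cond_indep P (sigma_Z Z) (sigma_resid x r beta ws) Sef.
Proof.
move=> A1 A2 hA1 hA2 p1 p2 A1p1 A2p2.
have [S1 _ eA1] := hA1.
have A1ec_setx : cond_prob_version P Sx A1 (ec_set S1).
  by rewrite -eA1; apply: ec_set_cond_prob => //; exact: ec_cond_prob_x.
have A1ec_set : cond_prob_version P Sef A1 (ec_set S1).
  by rewrite -eA1; apply: ec_set_cond_prob => //; exact: ec_cond_prob_ef.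
have [ec_setS iec_set _] := A1ec_set; have [p1S _ _] := A1p1; have [p2S _ _] := A2p2.
have A20 t : 0 <= (\1_A2 t : R) by case/andP: (indic01 R A2 t).
have mA2 := sigma_resid_measurable hA2.
have iA2 : P.-integrable setT (EFin \o (\1_A2 : T -> R)) by exact: integrable_indic.
have pull_out B : Sef B ->
    P.-integrable B (fun t => (ec_set S1 t * p2 t)%:E) /\
    (\int[P]_(t in B) (ec_set S1 t * p2 t)%:E =
     \int[P]_(t in B) (ec_set S1 t * \1_A2 t)%:E)%E.
  move=> SB; apply: (ge0_cond_exp_pull_out_integrable Sef_sigma Sef_sub A20 iA2 A2p2
    ec_setS SB).
  apply: integrable_mul01 (indic01 R A2) iec_set; first exact: Sef_sub.
  exact: measurable_indic.
have SefT : Sef setT.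
  by case: Sef_sigma => S0 SD _; rewrite -(setD0 setT); exact: SD.
have p12 : {ae P, forall t, (p1 \* p2) t = ec_set S1 t * p2 t}.
  by apply: filterS (cond_exp_version_ae_eq Sef_sigma Sef_sub A1p1 A1ec_set) => t /= ->.
split.
- exact: GmeasurableM.
- apply: integrable_ae_eq p12 _ (pull_out setT SefT).1.
  by apply: (Gmeasurable_measurable Sef_sub); exact: GmeasurableM.
- move=> B SB; have mB := Sef_sub SB.
  transitivity (\int[P]_(t in B) (ec_set S1 t * p2 t)%:E)%E.
    apply: ae_eq_integral => //; last by apply: filterS p12 => t -> _.
    + apply: (Gmeasurable_measurableE Sef_sub); exact: GmeasurableM.
    + apply: (Gmeasurable_measurableE Sef_sub); exact: GmeasurableM.
  rewrite (pull_out B SB).2.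
  rewrite -(cond_indep_integral hA1 hA2 (ec_set_ge0 S1) A1ec_setx (sigma_ef_sub SB)).
  rewrite integral_indic; first by rewrite setIC.
  - exact: mB.
  - by apply: measurableI => //; exact: sigma_Z_measurable.
Qed.

Lemma cond_prob_ef_gt0_lt1 g p : cond_prob_version P Sef [set t | Z t = g] p ->
  {ae P, forall t, 0 < p t < 1}.
Proof.
move=> Zp; have pec := cond_exp_version_ae_eq Sef_sigma Sef_sub Zp (ec_cond_prob_ef g).
have pe : {ae P, forall t, p t = e g (x t)}.
  by move: (ec_ae g); apply: filterS2 pec => t -> ->.
by move: (e01_ae g); apply: filterS2 pe => t ->.
Qed.

Definition x_resid_events g : set (set T) :=
  [set A | exists (B : set X) (D : set R), [/\ measurable B, measurable D &
     A = x @^-1` B `&` (fun t => r g t - beta (x t) (ws g)) @^-1` D]].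

Lemma x_resid_events_pi g : [/\ x_resid_events g `<=` measurable,
  setI_closed (x_resid_events g) & x_resid_events g setT].
Proof.
split.
- move=> _ [B [D [mB mD ->]]]; apply: measurableI.
  + by rewrite -(setTI (x @^-1` B)); exact: mx.
  + by rewrite -(setTI (_ @^-1` D)); exact: measurable_resid.
- move=> _ _ [B [D [mB mD ->]]] [B' [D' [mB' mD' ->]]].
  exists (B `&` B'), (D `&` D'); split; try exact: measurableI.
  by rewrite !preimage_setI setIACA.
- by exists setT, setT; split => //; rewrite !preimage_setT setIT.
Qed.

Lemma measurable_r_x_resid g :
  measurable_fun setT (r g : g_sigma_algebraType (x_resid_events g) -> R).
Proof.
have -> : r g = (fun t => r g t - beta (x t) (ws g)) \+ (fun t => beta (x t) (ws g)).
  by apply/funext => t; rewrite /= subrK.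
apply: measurable_funD => _ D mD; rewrite setTI; apply: sub_sigma_algebra.
  by exists setT, D; split => //; rewrite preimage_setT setTI.
exists ((fun a => beta a (ws g)) @^-1` D), setT; split => //.
  by have := mbeta g measurableT mD; rewrite setTI.
by rewrite preimage_setT setIT.
Qed.

(* Both sides are integrals of [r g] against the measures with densities
   [\1_[set t | Z t = g]] and [ec g]; by ignorability these agree on
   [x_resid_events g], for whose generated sigma-algebra [r g] is measurable. *)
Lemma integral_Z_r g C : Sx C ->
  (\int[P]_(t in C `&` [set t | Z t = g]) (r g t)%:E =
   \int[P]_(t in C) (r g t * ec g t)%:E)%E.
Proof.
move=> SC; have mC := Sx_sub SC.
have [Gsub GI GT] := x_resid_events_pi g.
have Zg0 t : 0 <= (\1_[set t | Z t = g] t : R).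
  by case/andP: (indic01 R [set t | Z t = g] t).
have ec0 t : 0 <= ec g t by case/andP: (ec01 g t).
have iZg : P.-integrable setT (EFin \o (\1_[set t | Z t = g] : T -> R)).
  exact: integrable_indic.
have mZg : measurable_fun setT (\1_[set t | Z t = g] : T -> R).
  exact: measurable_indic.
have iZgr := integrable_mul01 mC mZg (indic01 R _) (ir g).
have iecr := integrable_mul01 mC (measurable_ec g) (ec01 g) (ir g).
have [iZr Zr] := integral_density Zg0 iZg mC (measurable_r g) iZgr.
have [iecr' ecr] := integral_density ec0 (integrable_ec g) mC (measurable_r g) iecr.
rewrite integral_setI -Zr -ecr.
apply: (integral_eq_generated Gsub GI GT) => //; last 2 first.
- exact: measurable_r_x_resid.
- have [B mB <-] := SC; apply: sub_sigma_algebra.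
  by exists B, setT; split => //; rewrite preimage_setT setIT.
move=> _ [B [D [mB mD ->]]].
have SB : Sx (x @^-1` B) by exists B.
have hZ : sigma_Z Z [set t | Z t = g] by exists [set g].
have hD : sigma_resid x r beta ws ((fun t => r g t - beta (x t) (ws g)) @^-1` D).
  by apply: sub_sigma_algebra; exists g, D.
rewrite /= /density integral_indic//; last by apply: Gsub; exists B, D.
rewrite setICA integral_setI.
exact: (cond_indep_integral hZ hD ec0 (ec_cond_prob_x g) SB).
Qed.

Lemma cond_exp_version_r g (m : T -> R) :
  cond_exp_event_version P Sef [set t | Z t = g] (fun t => r (Z t) t) m ->
  cond_exp_version P Sef (r g) m.
Proof.
case=> mS im Zm; have mZg := mZ g.
have [k rk] := exists_cond_exp Sef_sigma Sef_sub (ir g).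
have [kS ik rkE] := rk.
have ZgS : forall C, Sef C -> P (C `&` [set t | Z t = g]) = 0%E -> P C = 0%E.
  move=> C SC C0; have mC := Sef_sub SC.
  apply: (integral_ae_gt0_eq0 mC (measurable_funTS (measurable_ec g))).
    by apply: filterS (ec_gt0_ae g) => t ? _.
  by case: (ec_cond_prob_ef g) => _ _ ->//; rewrite integral_indic// setIC.
have km : {ae P, forall t, m t = k t}.
  apply: (cond_exp_event_ae_eq Sef_sigma Sef_sub mZg ZgS mS kS im).
    exact: integrableS ik.
  move=> B SB; have mB := Sef_sub SB; have SBx := sigma_ef_sub SB.
  transitivity (\int[P]_(t in B `&` [set t | Z t = g]) (r g t)%:E)%E.
    by rewrite Zm//; apply: eq_integral => t /set_mem[_ /= ->].
  rewrite integral_Z_r// integral_setI.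
  transitivity (\int[P]_(t in B) (ec g t * r g t)%:E)%E.
    by apply: eq_integral => t _; rewrite mulrC.
  rewrite -(cond_exp_pull_out Sef_sigma Sef_sub (ir g) rk (Gmeasurable_ec g) SB).
    rewrite -(cond_exp_pull_out Sx_sigma Sx_sub (integrable_indic _ mZg)
      (ec_cond_prob_x g) (Gmeasurable_mono sigma_ef_sub kS) SBx).
      by apply: eq_integral => t _; rewrite mulrC.
    apply: integrable_mul01 (indic01 R _) ik => //; exact: measurable_indic.
  by rewrite (_ : (fun t => _) = fun t => (r g t * ec g t)%:E);
    [exact: integrable_mul01 mB (measurable_ec g) (ec01 g) (ir g)|
     apply/funext => t; rewrite mulrC].
split=> //; first exact: integrable_ae_eq km (Gmeasurable_measurable Sef_sub mS) ik.
move=> B SB; have mB := Sef_sub SB; rewrite -rkE//; apply: ae_eq_integral => //.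
- exact: Gmeasurable_measurableE mS.
- exact: Gmeasurable_measurableE kS.
- by apply: filterS km => t -> _.
Qed.

Lemma cond_exp_contrast_ef (h : 'I_G -> R) (m : 'I_G -> T -> R) :
  (forall g, cond_exp_event_version P Sef [set t | Z t = g]
               (fun t => r (Z t) t) (m g)) ->
  cond_exp_version P Sef (fun t => \sum_(g < G) h g * r g t)
                         (fun t => \sum_(g < G) h g * m g t).
Proof. by move=> Zm; apply: cond_exp_version_sum => // g; exact: cond_exp_version_r. Qed.

End proposition3.

Unset Implicit Arguments. Set Strict Implicit.

Theorem proposition3
  (d : measure_display) (T : measurableType d) (R : realType)
  (P : probability T R) (G : nat)
  (dX : measure_display) (X : measurableType dX)
  (dY : measure_display) (Y : measurableType dY) (W : Type)
  (x : T -> X) (w : T -> W) (ws : 'I_G -> W) (Z : T -> 'I_G)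
  (r : 'I_G -> T -> R) (beta : X -> W -> R)
  (e : 'I_G -> X -> R) (f : X -> Y)
  (mx : measurable_fun setT x)
  (mf : measurable_fun setT f)
  (me : forall g, measurable_fun setT (e g))
  (mbeta : forall g, measurable_fun setT (fun a => beta a (ws g)))
  (mZ : forall g, measurable [set t | Z t = g])
  (ir : forall g, P.-integrable setT (EFin \o r g))
  (ws_inj : injective ws)
  (Zw : forall t g, Z t = g <-> w t = ws g)
  (Hign : ignorable_aliasing P x Z r beta ws)
  (He : forall g, cond_prob_version P (sigma_of x) [set t | Z t = g] (e g \o x)) :
  (* (a) *)
  cond_indep P (sigma_Z Z) (sigma_resid x r beta ws) (sigma_ef x e f) /\
  (* (b) *)
  (forall g : 'I_G, forall p : T -> R,
     cond_prob_version P (sigma_ef x e f) [set t | Z t = g] p ->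
     {ae P, forall t, 0 < p t < 1}) /\
  (* (c) *)
  (forall h : 'I_G -> R,
     \sum_(g < G) h g = 0 -> (exists g, h g != 0) -> not_aliased h beta ws ->
     forall m : 'I_G -> T -> R,
       (forall g, cond_exp_event_version P (sigma_ef x e f) [set t | Z t = g]
                    (fun t => r (Z t) t) (m g)) ->
       cond_exp_version P (sigma_ef x e f)
         (fun t => \sum_(g < G) h g * r g t)
         (fun t => \sum_(g < G) h g * m g t)).
Proof.
split; first exact: cond_indep_ef mx mf me mbeta mZ ir Hign He.
split; first exact: cond_prob_ef_gt0_lt1 mx mf me Hign He.
by move=> h _ _ _; exact: cond_exp_contrast_ef mx mf me mbeta mZ ir Hign He h.
Qed.
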